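(* Let $n\ge1$. A permutation $w\in\mathfrak S_n$ has $\operatorname{exc}(w)=k$ if and only if $w$ can be written as a product of $k$ permutations each having exactly one excedance, and not as a product of fewer such permutations; that is, $\operatorname{exc}=\ell_T$ where $T=\{t\in\mathfrak S_n:\operatorname{exc}(t)=1\}$. Furthermore, $\operatorname{exc}$ is subadditive, and the poset $(\mathfrak S_n,\le_{\operatorname{exc}})$, where $x\le_{\operatorname{exc}}y$ iff $\operatorname{exc}(x)+\operatorname{exc}(x^{-1}y)=\operatorname{exc}(y)$, is graded by $\operatorname{exc}$ (every cover relation $x\lessdot y$ has $\operatorname{exc}(y)=\operatorname{exc}(x)+1$), the number of elements of rank $k$ is the Eulerian number counting permutations of $[n]$ with $k$ excedances, and it has a unique maximal element, namely $23\cdots n1=(1\,2\,\cdots\,n)$.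
   Context: For $w\in\mathfrak S_n$, $\operatorname{exc}(w)=\#\{i\in[n-1]: w(i)>i\}$ is the number of excedances. Permutations are composed as functions. $\ell_T(x)$ is the minimum number of elements of $T$ whose product is $x$. *)

From mathcomp Require Import all_boot all_fingroup.
Set Implicit Arguments. Unset Strict Implicit. Unset Printing Implicit Defensive.
Local Open Scope group_scope.

(* Permutations of [n] are {perm 'I_n}; the point i of 'I_n stands for i+1 of [n]. *)

(* Composition as functions: (fcomp x y) i = x (y i).  Note mathcomp's x * y is
   "first x then y", so fcomp x y = y * x. *)
Definition fcomp n (x y : {perm 'I_n}) : {perm 'I_n} := y * x.

Definition exc n (w : {perm 'I_n}) : nat :=
  #|[set i : 'I_n | (i < n.-1)%N && (i < w i)%N]|.

Definition one_exc n (t : {perm 'I_n}) : bool := exc t == 1%N.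

Definition fprod n (s : seq {perm 'I_n}) : {perm 'I_n} := foldr (@fcomp n) 1 s.

Definition prod_of_T n (k : nat) (x : {perm 'I_n}) : Prop :=
  exists s : seq {perm 'I_n}, [/\ size s = k, all (@one_exc n) s & fprod s = x].

Definition ellT_is n (x : {perm 'I_n}) (k : nat) : Prop :=
  prod_of_T k x /\ forall m, (m < k)%N -> ~ prod_of_T m x.

Definition le_exc n (x y : {perm 'I_n}) : bool :=
  (exc x + exc (fcomp x^-1 y) == exc y)%N.

Definition covers_exc n (x y : {perm 'I_n}) : Prop :=
  [/\ le_exc x y, x != y &
      forall z, le_exc x z -> le_exc z y -> z = x \/ z = y].

Definition maximal_exc n (m : {perm 'I_n}) : Prop :=
  forall y, le_exc m y -> y = m.

Definition eulerian (n k : nat) : nat := #|[set w : {perm 'I_n} | exc w == k]|.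

(* the cycle (1 2 ... n) = 23...n1, i.e. i |-> i+1 mod n *)
Definition long_cycle n : {perm 'I_n} := perm (@ordS_inj n).

From mathcomp Require Import all_boot all_fingroup zify.
(* Imported after mathcomp so that [fprod] is the product of a list, not the
   finite product type of finfun. *)
Set Implicit Arguments. Unset Strict Implicit. Unset Printing Implicit Defensive.
Local Open Scope group_scope.

(* An excedance of a product x y (x applied first) is an excedance of x or the
   preimage under x of an excedance of y, so exc is subadditive and a product of
   k one-excedance permutations has at most k excedances.  Conversely, if a is
   the largest excedance of w, following the cycle of w from a until it falls
   back to at most a yields a permutation t with the single excedance a such
   that t^-1 w has one excedance fewer; hence exc is the word length l_T.  The
   order statements hold for the prefix order of any subadditive length on a
   group whose positive-length elements lose one unit of length against some
   generator.  Finally exc w + exc (c w^-1) = n-1 for the long cycle c, as the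
   n-1 points j with w(j) <> 1 split into the excedances of w and those of
   c w^-1; so every w lies below c, which is therefore the unique maximal
   element. *)

Section LengthPrefixOrder.

Variables (gT : finGroupType) (len : gT -> nat).
Hypothesis len_eq0 : forall g, len g = 0%N -> g = 1.
Hypothesis len_mul : forall g h, (len (g * h) <= len g + len h)%N.

Definition len_prefix (x y : gT) : bool := (len x + len (y * x^-1) == len y)%N.

Lemma len_mulV g h : (len g <= len (g * h^-1) + len h)%N.
Proof. by rewrite -{1}(mulgKV h g) len_mul. Qed.

Lemma len_prefix_anti x y : len_prefix x y -> len_prefix y x -> x = y.
Proof.
move=> /eqP lxy /eqP lyx.
have /len_eq0/eqP : len (y * x^-1) = 0%N by lia.
by rewrite -eq_mulgV1 => /eqP.
Qed.

Lemma len_prefix_trans x y z : len_prefix x y -> len_prefix y z -> len_prefix x z.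
Proof.
move=> /eqP lxy /eqP lyz; apply/eqP.
have zx_split : z * x^-1 = (z * y^-1) * (y * x^-1) by rewrite mulgA mulgKV.
have := len_mul (z * y^-1) (y * x^-1); rewrite -zx_split.
have := len_mulV z x; lia.
Qed.

Lemma len_prefix_top_max c :
  (forall m, len_prefix m c) -> forall y, len_prefix c y -> y = c.
Proof. by move=> top y cy; exact: len_prefix_anti (top y) cy. Qed.

Hypothesis len_drop :
  forall g d, len g = d.+1 -> exists2 h, len h = d & len (g * h^-1) = 1%N.

Lemma len_prefix_cover x y : len_prefix x y -> x != y ->
  (forall z, len_prefix x z -> len_prefix z y -> z = x \/ z = y) ->
  len y = (len x).+1.
Proof.
move=> /eqP lxy neq_xy between.
case Eyx: (len (y * x^-1)) lxy => [|[|d]] lxy; first 2 last.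
- have [h lh lyh] := len_drop Eyx.
  pose z := h * x.
  have lz := len_mul h x; have := len_mulV y z.
  rewrite /z invMg mulgA lyh => lyz.
  have xz : len_prefix x z by rewrite /len_prefix /z mulgK lh; apply/eqP; lia.
  have zy : len_prefix z y by rewrite /len_prefix /z invMg mulgA lyh; apply/eqP; lia.
  by case: (between z xz zy) => eq_z; move: lz lyz; rewrite -/z eq_z; lia.
- by case/eqP: neq_xy; apply/esym/eqP; rewrite eq_mulgV1 (len_eq0 Eyx).
- lia.
Qed.

Hypothesis len1 : len 1 = 0%N.

Lemma len_prefix_refl x : len_prefix x x.
Proof. by rewrite /len_prefix mulgV len1 addn0. Qed.

End LengthPrefixOrder.

Section Excedances.

Variable n : nat.
Implicit Types (t v w x y : {perm 'I_n}) (a i m p : 'I_n).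

Definition excedances w : {set 'I_n} := [set i : 'I_n | (i < w i)%N].

Lemma exc_card w : exc w = #|excedances w|.
Proof.
apply: eq_card => i; rewrite !inE andb_idl // => lt_i_wi.
by have := ltn_ord (w i); lia.
Qed.

Lemma excedances1 : excedances 1 = set0.
Proof. by apply/setP => i; rewrite !inE perm1 ltnn. Qed.

Lemma exc1 : exc (1 : {perm 'I_n}) = 0%N.
Proof. by rewrite exc_card excedances1 cards0. Qed.

Lemma exc_eq0 w : exc w = 0%N -> w = 1.
Proof.
rewrite exc_card => /eqP; rewrite cards_eq0 => /eqP no_exc.
have le_w i : (w i <= i)%N.
  by move/setP: no_exc => /(_ i); rewrite !inE => /negbT; rewrite -leqNgt.
suff fix_w k i : (i < k)%N -> w i = i by apply/permP => i; rewrite perm1 (fix_w i.+1).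
elim: k i => [//|k IHk] i lt_ik.
case: (ltngtP (w i) i) (le_w i) => [lt_wi_i _||/val_inj //]; last lia.
by apply: perm_inj; apply: IHk; lia.
Qed.

Lemma excedances_mul x y :
  excedances (x * y) \subset excedances x :|: x @^-1: excedances y.
Proof.
apply/subsetP => i; rewrite !inE permM => lt_i_yxi.
by case: (ltnP i (x i)) => //= le_xi_i; apply: leq_ltn_trans le_xi_i lt_i_yxi.
Qed.

Lemma exc_mul x y : (exc (x * y) <= exc x + exc y)%N.
Proof.
rewrite !exc_card; apply: leq_trans (subset_leq_card (excedances_mul x y)) _.
by rewrite -[#|excedances y|](card_preimset _ (@perm_inj _ x)) leq_card_setU.
Qed.

Lemma in_excedances_tperm v a m i : a != m ->
  (i \in excedances (tperm a m * v)) =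
  if i == a then (a < v m)%N else if i == m then (m < v a)%N else i \in excedances v.
Proof.
move=> neq_am; rewrite !inE permM.
case: eqVneq => [->|neq_ia]; first by rewrite tpermL.
by case: eqVneq => [->|neq_im]; rewrite ?tpermR ?tpermD // eq_sym.
Qed.

Lemma in_excedances_tperm_image w a i : let m := w a in
  (a < m)%N -> (w m <= m)%N ->
  (i \in excedances (tperm a m * w)) = if i == a then (a < w m)%N else i \in excedances w.
Proof.
move=> m lt_a_m le_wm_m; have neq_am : a != m by rewrite neq_ltn lt_a_m.
rewrite in_excedances_tperm //; case: eqVneq => // _.
by case: eqVneq => // ->; rewrite inE ltnn ltnNge le_wm_m.
Qed.

(* t is the cycle a -> w a -> w (w a) -> ... of w, closed up as soon as the
   orbit falls back to at most a; the induction on w a composes w with the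
   transposition (a, w a) until that happens. *)
Lemma exc_peel_cycle w a : (a < w a)%N -> (forall p, (a < p)%N -> (w p <= p)%N) ->
  exists t, [/\ excedances t = [set a], t a = w a,
                forall p, w p = p -> t p = p & (exc (t^-1 * w)).+1 = exc w].
Proof.
have [k] := ubnP (w a); elim: k w => // k IHk w lt_wa_k lt_a_wa below_a.
set m := w a; pose tau := tperm a m.
have neq_am : a != m by rewrite neq_ltn lt_a_wa.
have le_wm_m : (w m <= m)%N := below_a m lt_a_wa.
have neq_wm_m : w m != m.
  by apply: contra_neq neq_am => wm_m; apply: (@perm_inj _ w); rewrite wm_m.
have fix_tau p : w p = p -> tau p = p.
  move=> wp_p; rewrite tpermD //; apply/eqP => eq_p.
    by move: lt_a_wa; rewrite eq_p wp_p ltnn.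
  by move: neq_wm_m; rewrite eq_p wp_p eqxx.
have in_exc_tau_w i := in_excedances_tperm_image i lt_a_wa le_wm_m.
case: (leqP (w m) a) => [le_wm_a | lt_a_wm].
  exists tau; split=> //.
  - apply/setP => i; rewrite -[tau]mulg1 in_excedances_tperm // excedances1 !inE !perm1.
    case: eqVneq => [_|_]; first exact: lt_a_wa.
    by case: eqVneq => // _; rewrite ltnNge ltnW.
  - exact: tpermL.
  - rewrite tpermV !exc_card (cardsD1 a (excedances w)) inE lt_a_wa add1n.
    congr _.+1; apply: eq_card => i; rewrite in_exc_tau_w !inE.
    by case: eqVneq => //= _; rewrite ltnNge le_wm_a.
have [|||t [exc_set_t t_a fix_t exc_t_w]] := IHk (tau * w).
- by rewrite permM tpermL -ltnS (leq_trans _ lt_wa_k) // ltnS ltn_neqAle neq_wm_m.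
- by rewrite permM tpermL.
- move=> p lt_a_p; rewrite permM; case: (eqVneq p m) => [->|neq_pm].
    by rewrite tpermR.
  have neq_ap : a != p by apply: contraTneq lt_a_p => <-; rewrite ltnn.
  by rewrite tpermD 1?[m == p]eq_sym //; apply: below_a.
have t_m : t m = m by apply: fix_t; rewrite permM tpermR.
exists (tau * t); split.
- apply/setP => i; rewrite in_excedances_tperm // exc_set_t !inE t_m t_a permM tpermL.
  case: eqVneq => // _; case: eqVneq => [_|//].
  by rewrite ltnNge ltnW // ltn_neqAle neq_wm_m.
- by rewrite permM tpermL t_m.
- by move=> p wp_p; rewrite permM fix_tau // fix_t // permM fix_tau.
- rewrite invMg tpermV -mulgA exc_t_w !exc_card.
  by apply: eq_card => i; rewrite in_exc_tau_w lt_a_wm; case: eqVneq => // ->; rewrite inE.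
Qed.

Lemma exc_drop w d : exc w = d.+1 -> exists2 t, exc t = 1%N & exc (t^-1 * w) = d.
Proof.
rewrite exc_card => exc_w.
have /set0Pn[a0] : excedances w != set0 by rewrite -card_gt0 exc_w.
rewrite inE => a0_exc.
case: (@arg_maxnP _ a0 (fun i => i < w i)%N (fun i => i : nat) a0_exc) => a a_exc a_max.
have below_a p : (a < p)%N -> (w p <= p)%N.
  by move=> lt_a_p; rewrite leqNgt; apply: contraTN lt_a_p => /a_max; rewrite -leqNgt.
have [t [exc_set_t _ _ exc_tw]] := exc_peel_cycle a_exc below_a.
exists t; first by rewrite exc_card exc_set_t cards1.
by move: exc_tw; rewrite [exc w]exc_card exc_w => -[].
Qed.

Lemma fprod_rcons (s : seq {perm 'I_n}) t : fprod (rcons s t) = t * fprod s.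
Proof. by elim: s => [|x s IHs] /=; rewrite /fcomp ?mulg1 ?mul1g // IHs mulgA. Qed.

Lemma prod_of_T_exc d w : exc w = d -> prod_of_T d w.
Proof.
elim: d w => [|d IHd] w exc_w.
  by exists [::]; split; rewrite // (exc_eq0 exc_w).
have [t exc_t exc_tw] := exc_drop exc_w.
have [s [size_s all_s prod_s]] := IHd _ exc_tw.
exists (rcons s t); split.
- by rewrite size_rcons size_s.
- by rewrite all_rcons /one_exc exc_t.
- by rewrite fprod_rcons prod_s mulKVg.
Qed.

Lemma exc_le_prod_of_T k w : prod_of_T k w -> (exc w <= k)%N.
Proof.
case=> s [<- all_s <-]; elim: s all_s => [|t s IHs] /=; first by rewrite exc1.
case/andP => /eqP exc_t /IHs le_s; rewrite /fcomp.
by apply: leq_trans (exc_mul _ _) _; rewrite exc_t addn1 ltnS.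
Qed.

Lemma exc_ellT w k : exc w = k <-> ellT_is w k.
Proof.
split=> [<- | [prod_k fewer]].
  by split=> [|m lt_m /exc_le_prod_of_T]; [exact: prod_of_T_exc | rewrite leqNgt lt_m].
apply/eqP; rewrite eqn_leq exc_le_prod_of_T //= leqNgt; apply/negP => lt_exc.
exact: fewer _ lt_exc (prod_of_T_exc (erefl _)).
Qed.

Lemma long_cycleV i : (long_cycle n)^-1 i = ord_pred i.
Proof. by apply: (@perm_inj _ (long_cycle n)); rewrite permKV permE ord_predK. Qed.

Lemma ord_pred_lt i (j : 'I_n) : (ord_pred i < j)%N = (0 < i)%N && (i <= j)%N.
Proof.
have := ltn_ord j; have := ltn_ord i; rewrite /=.
case: (posnP i) => [-> | i_gt0] lt_i lt_j /=.
  by rewrite add0n modn_small; lia.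
by rewrite -(prednK i_gt0) addSn /= modnDr modn_small; lia.
Qed.

Lemma exc_inv_card w : exc w = #|[set j : 'I_n | (w^-1 j < j)%N]|.
Proof.
rewrite exc_card -[RHS](card_preimset _ (@perm_inj _ w)).
by apply: eq_card => i; rewrite !inE permK.
Qed.

Lemma exc_add_exc_long_cycle (n_gt0 : (0 < n)%N) w :
  (exc w + exc (long_cycle n * w^-1) = n.-1)%N.
Proof.
pose z : 'I_n := Ordinal n_gt0.
have card_nonzero : #|w @^-1: [set~ z]| = n.-1.
  by rewrite card_preimset ?cardsC1 ?card_ord //; apply: perm_inj.
rewrite -card_nonzero -(cardsID (excedances w)) exc_card exc_inv_card.
have neq_z i : (i != z) = (0 < i)%N by rewrite lt0n -val_eqE.
congr (_ + _)%N; apply: eq_card => j; rewrite !inE neq_z.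
  by rewrite andb_idl // => /(leq_ltn_trans (leq0n j)).
by rewrite invMg invgK permM long_cycleV ord_pred_lt -leqNgt andbC.
Qed.

End Excedances.

Unset Implicit Arguments.
Theorem mainTheorem17 (n : nat) (hn : (0 < n)%N) :
  (forall (w : {perm 'I_n}) (k : nat), exc w = k <-> ellT_is w k) /\
  (forall x y : {perm 'I_n}, (exc (fcomp x y) <= exc x + exc y)%N) /\
  (forall x : {perm 'I_n}, le_exc x x) /\
  (forall x y : {perm 'I_n}, le_exc x y -> le_exc y x -> x = y) /\
  (forall x y z : {perm 'I_n}, le_exc x y -> le_exc y z -> le_exc x z) /\
  (forall x y : {perm 'I_n}, covers_exc x y -> exc y = (exc x).+1) /\
  (forall k : nat, #|[set w : {perm 'I_n} | exc w == k]| = eulerian n k) /\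
  maximal_exc (long_cycle n) /\
  (forall m : {perm 'I_n}, maximal_exc m -> m = long_cycle n).
Proof.
have exc_len_drop (g : {perm 'I_n}) d :
    exc g = d.+1 -> exists2 h, exc h = d & exc (g * h^-1) = 1%N.
  case/exc_drop => t exc_t exc_tw; exists (t^-1 * g) => //.
  by rewrite invMg invgK mulgA mulgV mul1g.
have below_long_cycle (m : {perm 'I_n}) : le_exc m (long_cycle n).
  apply/eqP; rewrite /fcomp exc_add_exc_long_cycle //.
  by have := exc_add_exc_long_cycle hn 1; rewrite exc1 invg1 mulg1.
split; first exact: exc_ellT.
split; first by move=> x y; rewrite addnC; apply: exc_mul.
split; first exact: len_prefix_refl (@exc1 n).
split; first exact: len_prefix_anti (@exc_eq0 n).
split; first exact: len_prefix_trans (@exc_mul n).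
split.
  move=> x y [le_xy neq_xy between].
  exact: len_prefix_cover (@exc_eq0 n) (@exc_mul n) exc_len_drop _ _ le_xy neq_xy between.
split; first by [].
split; first exact: (@len_prefix_top_max _ _ (@exc_eq0 n) (long_cycle n) below_long_cycle).
by move=> m max_m; apply/esym/max_m.
Qed.
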